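(* Let $Q$ be a division ring with a surjective valuation $v:Q\to\mathbb{Z}\cup\{\infty\}$, valuation ring $R$, commutative residue field $L$, uniformizer $\pi$, and automorphism $\phi:L\to L$, $\bar x\mapsto\overline{\pi x\pi^{-1}}$. Let $V\subseteq Q^n$ be a right $Q$-vector subspace, and for $\alpha\in\mathbb{Z}^n$ set $V_\alpha:=\overline{(\pi^{-\alpha}V)\cap R^n}\subseteq L^n$. Then $(V_\alpha)_{\alpha\in\mathbb{Z}^n}$ is an $(L,\phi^{-1})$-linear flock.
   Context: $\pi^{-\alpha}$ denotes the diagonal matrix with entries $\pi^{-\alpha_1},\dots,\pi^{-\alpha_n}$ acting on $Q^n$ from the left, and the bar denotes coordinatewise reduction $R^n\to L^n$. For a field $L$ with automorphism $\psi$, an $(L,\psi)$-linear flock is a family of $L$-subspaces $(V_\alpha)_{\alpha\in\mathbb{Z}^n}$ of $L^n$, all of the same dimension, such that (1) for all $\alpha\in\mathbb{Z}^n$ and $1\le i\le n$, $V_\alpha/i=V_{\alpha+e_i}\setminus i$, where $W/i$ is the intersection of $W$ with the hyperplane $\{x_i=0\}$, $W\setminus i$ is the image of $W$ under setting the $i$-th coordinate to zero, and $e_i$ is the $i$-th standard basis vector of $\mathbb{Z}^n$; and (2) for all $\alpha$, $V_{\alpha+(1,\dots,1)}=\psi(V_\alpha)$, with $\psi$ applied coordinatewise. *)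

From HB Require Import structures.
From mathcomp Require Import all_boot all_order all_algebra.
Set Implicit Arguments. Unset Strict Implicit. Unset Printing Implicit Defensive.
Import Order.TTheory GRing.Theory Num.Theory.
Local Open Scope ring_scope.

Definition division_ring (Q : unitRingType) : Prop :=
  forall x : Q, x != 0 -> x \is a GRing.unit.

(* A valuation v : Q -> Z u {oo}, encoded as v : Q -> int where v 0 is
   meaningless (v 0 = oo by convention; all axioms only use v on nonzero
   elements). *)
Definition is_valuation (Q : unitRingType) (v : Q -> int) : Prop :=
  (forall x y : Q, x != 0 -> y != 0 -> v (x * y) = v x + v y) /\
  (forall x y : Q, x != 0 -> y != 0 -> x + y != 0 ->
      Num.min (v x) (v y) <= v (x + y)).

Definition surjective_valuation (Q : unitRingType) (v : Q -> int) : Prop :=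
  forall z : int, exists x : Q, x != 0 /\ v x = z.

Definition in_valring (Q : unitRingType) (v : Q -> int) (x : Q) : Prop :=
  x = 0 \/ 0 <= v x.

Definition in_maxideal (Q : unitRingType) (v : Q -> int) (x : Q) : Prop :=
  x = 0 \/ 0 < v x.

(* red : R -> L exhibits L as the residue field R / m (a ring surjection
   R -> L with kernel m); values of red outside R are irrelevant. *)
Definition is_residue_map (Q : unitRingType) (v : Q -> int)
    (L : fieldType) (red : Q -> L) : Prop :=
  [/\ red 1 = 1,
      (forall x y, in_valring v x -> in_valring v y -> red (x + y) = red x + red y),
      (forall x y, in_valring v x -> in_valring v y -> red (x * y) = red x * red y),
      (forall x, in_valring v x -> (red x = 0 <-> in_maxideal v x))
    & (forall y : L, exists x, in_valring v x /\ red x = y)].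

Definition ebasis (n : nat) (i : 'I_n) : 'I_n -> int := fun j => (j == i)%:Z.
Definition zadd (n : nat) (a b : 'I_n -> int) : 'I_n -> int := fun j => a j + b j.
Definition zones (n : nat) : 'I_n -> int := fun _ => 1.

Definition contr_mem (L : fieldType) (n : nat) (W : {vspace 'rV[L]_n}) (i : 'I_n)
    (y : 'rV[L]_n) : Prop := y \in W /\ y ord0 i = 0.

Definition zero_coord (L : fieldType) (n : nat) (i : 'I_n) (x : 'rV[L]_n) : 'rV[L]_n :=
  \row_j (if j == i then 0 else x ord0 j).
Definition del_mem (L : fieldType) (n : nat) (W : {vspace 'rV[L]_n}) (i : 'I_n)
    (y : 'rV[L]_n) : Prop := exists2 x, x \in W & y = zero_coord i x.

(* (L, psi)-linear flock; psi is assumed to be a field automorphism of L. *)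
Definition linear_flock (L : fieldType) (psi : L -> L) (n : nat)
    (F : ('I_n -> int) -> {vspace 'rV[L]_n}) : Prop :=
  [/\ (forall a b, \dim (F a) = \dim (F b)),
      (forall a i y, contr_mem (F a) i y <-> del_mem (F (zadd a (ebasis i))) i y)
    & (forall a y, y \in F (zadd a (@zones n)) <->
                   exists2 x, x \in F a & y = map_mx psi x)].

Definition right_subspace (Q : unitRingType) (n : nat) (V : 'rV[Q]_n -> Prop) : Prop :=
  [/\ V 0,
      (forall x y, V x -> V y -> V (x + y))
    & (forall x c, V x -> V (\row_j (x ord0 j * c)))].

Definition Valpha_mem (Q : unitRingType) (v : Q -> int) (L : fieldType) (red : Q -> L)
    (pi : Q) (n : nat) (V : 'rV[Q]_n -> Prop) (a : 'I_n -> int) (y : 'rV[L]_n) : Prop :=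
  exists x, V x /\
    (forall i, in_valring v (pi ^ (- a i) * x ord0 i)) /\
    (forall i, y ord0 i = red (pi ^ (- a i) * x ord0 i)).

From HB Require Import structures.
From mathcomp Require Import all_boot all_order all_algebra.
From mathcomp Require Import zify.
From Stdlib Require Import Classical ClassicalEpsilon FunctionalExtensionality.
Set Implicit Arguments. Unset Strict Implicit. Unset Printing Implicit Defensive.
Import Order.TTheory GRing.Theory Num.Theory.
Local Open Scope ring_scope.

(* Multiplying a witness of [V_alpha] on the right by [pi^-1] shifts every
   exponent by one and conjugates each coordinate by [pi], which acts on
   residues by [phi]; hence [V_(alpha+1) = phi^-1 (V_alpha)]. Keeping the same
   witness while raising one exponent shows [V_alpha / i = V_(alpha+e_i) \ i],
   and [e_i] lies in [V_(alpha+e_i)] exactly when [V_alpha] has a vector with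
   nonzero [i]-th coordinate. Rank-nullity for the coordinate projections then
   gives [dim V_alpha = dim V_(alpha+e_i)], so all dimensions agree. *)

Section UnitPowers.
Variables (R : unitRingType) (x : R).
Hypothesis ux : x \is a GRing.unit.

Lemma mul_exprzNS k w : x ^ (- (k + 1)) * w = x^-1 * (x ^ (- k) * w).
Proof. by rewrite opprD addrC exprzDr // exprN1 mulrA. Qed.

Lemma mul_exprzN k w : x ^ (- k) * w = x * (x ^ (- (k + 1)) * w).
Proof. by rewrite mul_exprzNS mulVKr. Qed.

Lemma mul_exprzNS_conj k w : x ^ (- (k + 1)) * (w * x) = x^-1 * (x ^ (- k) * w) * x.
Proof. by rewrite mul_exprzNS !mulrA. Qed.

Lemma mul_exprzN_conj k w : x ^ (- k) * (w * x^-1) = x * (x ^ (- (k + 1)) * w) * x^-1.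
Proof. by rewrite mul_exprzN !mulrA. Qed.

End UnitPowers.

Section CoordinateSubspaces.
Variables (L : fieldType) (n : nat).

Lemma vspace_of_pred (S : 'rV[L]_n -> Prop) :
    S 0 -> (forall x y, S x -> S y -> S (x + y)) -> (forall c x, S x -> S (c *: x)) ->
  exists U : {vspace 'rV[L]_n}, forall y, y \in U <-> S y.
Proof.
move=> S0 SD SZ.
suff grow k (U : {vspace 'rV[L]_n}) : (forall u, u \in U -> S u) ->
    (\dim {:'rV[L]_n} - \dim U <= k)%N ->
    exists U : {vspace 'rV[L]_n}, forall y, y \in U <-> S y.
  by apply: (grow _ 0%VS) => [u|]; first by rewrite memv0 => /eqP ->.
elim: k U => [|k IHk] U US codimU.
  have Ufull : U = fullv by apply/eqP; rewrite eqEdim subvf /= -subn_eq0 -leqn0.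
  by exists U => y; split=> [/US|_]; rewrite // Ufull memvf.
have [[y Sy yU]|SU] := classic (exists2 y, S y & y \notin U); last first.
  exists U => y; split=> [/US //|Sy]; apply/negPn/negP => yU.
  by apply: SU; exists y.
apply: (IHk (U + <[y]>)%VS).
  move=> _ /memv_addP [u uU [_ /vlineP [c ->] ->]].
  by apply: SD; [exact: US | exact: SZ].
have ltUUy : (\dim U < \dim (U + <[y]>))%N.
  rewrite (ltn_leqif (dimv_leqif_eq (addvSl U <[y]>))).
  apply: contraNneq yU => ->; exact: subvP (addvSr U _) _ (memv_line y).
have := dimvS (subvf (U + <[y]>)%VS); lia.
Qed.

Definition coord_proj (i : 'I_n) : 'End('rV[L]_n) :=
  linfun (mulmxr (diag_mx (\row_j (j == i)%:R))).
Definition coord_del (i : 'I_n) : 'End('rV[L]_n) :=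
  linfun (mulmxr (diag_mx (\row_j (j != i)%:R))).

Lemma coord_projE i u : coord_proj i u = u ord0 i *: delta_mx ord0 i.
Proof.
rewrite lfunE /= mul_mx_diag; apply/matrixP => o j; rewrite !mxE (ord1 o) eqxx /=.
by case: eqP => [->|_]; rewrite ?mulr0 ?mulr1.
Qed.

Lemma coord_delE i u : coord_del i u = zero_coord i u.
Proof.
rewrite lfunE /= mul_mx_diag; apply/matrixP => o j; rewrite !mxE (ord1 o).
by case: (j == i); rewrite ?mulr0 ?mulr1.
Qed.

Lemma zero_coord_eq0 i (y : 'rV[L]_n) :
  (zero_coord i y == 0) = (y == y ord0 i *: delta_mx ord0 i).
Proof.
apply/eqP/eqP => [|->]; last first.
  by apply/matrixP => o j; rewrite !mxE eqxx; case: eqP; rewrite ?mulr0.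
move=> /matrixP y0; apply/matrixP => o j; have := y0 o j; rewrite !mxE (ord1 o) eqxx.
by case: eqP => [->|_ ->]; rewrite ?mulr1 ?mulr0.
Qed.

Lemma dimv_contr_del (W W' : {vspace 'rV[L]_n}) i :
    (forall y, contr_mem W i y <-> del_mem W' i y) ->
    ((exists2 y, y \in W & y ord0 i != 0) <-> delta_mx ord0 i \in W') ->
  \dim W = \dim W'.
Proof.
move=> contr_del hdelta.
have delta_i c : (c *: delta_mx ord0 i : 'rV[L]_n) ord0 i = c.
  by rewrite !mxE !eqxx mulr1.
have delta_neq0 : delta_mx ord0 i != 0 :> 'rV[L]_n.
  by apply/eqP => /matrixP/(_ ord0 i)/eqP; rewrite !mxE !eqxx oner_eq0.
rewrite -(limg_ker_dim (coord_proj i) W) -(limg_ker_dim (coord_del i) W') addnC.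
congr (_ + _)%N; congr (\dim _); apply/vspaceP => y.
- rewrite memv_cap memv_ker coord_delE zero_coord_eq0.
  apply/memv_imgP/andP => [[w wW ->]|[yW /eqP ey]].
    rewrite coord_projE delta_i; split=> //.
    have [->|wi0] := eqVneq (w ord0 i) 0; first by rewrite scale0r mem0v.
    by rewrite memvZ //; apply/hdelta; exists w.
  have [yi0|yi0] := eqVneq (y ord0 i) 0.
    by exists 0; rewrite ?mem0v // linear0 ey yi0 scale0r.
  have : delta_mx ord0 i \in W' by rewrite -[delta_mx _ _](scalerK yi0) -ey memvZ.
  move=> /hdelta [w wW wi0]; exists ((y ord0 i / w ord0 i) *: w); first exact: memvZ.
  by rewrite coord_projE mxE divfK.
- rewrite memv_cap memv_ker coord_projE scaler_eq0 (negbTE delta_neq0) orbF.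
  apply/andP/memv_imgP => [[yW /eqP yi]|[x xW ->]].
    have [x xW ->] := proj1 (contr_del y) (conj yW yi).
    by exists x; rewrite ?coord_delE.
  have [xW' xi] := proj2 (contr_del _) (ex_intro2 _ _ x xW erefl).
  by rewrite coord_delE xW' xi.
Qed.

Lemma zadd_ebasisE (a : 'I_n -> int) i j :
  zadd a (ebasis i) j = if j == i then a j + 1 else a j.
Proof. by rewrite /zadd /ebasis; case: eqP; rewrite ?addr0. Qed.

Lemma constant_of_shift_invariant (T : Type) (d : ('I_n -> int) -> T) :
    (forall a b, a =1 b -> d a = d b) ->
    (forall a i, d a = d (zadd a (ebasis i))) ->
  forall a b, d a = d b.
Proof.
move=> d_ext d_shift.
pose upd (a : 'I_n -> int) (i : 'I_n) (k : int) j := if j == i then k else a j.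
have upd_succ a i k : d (upd a i k) = d (upd a i (k + 1)).
  by rewrite (d_shift _ i); apply: d_ext => j; rewrite /upd zadd_ebasisE; case: eqP.
have upd_addn a i k (m : nat) : d (upd a i k) = d (upd a i (k + m)).
  elim: m => [|m IHm]; first by rewrite addr0.
  by rewrite IHm upd_succ -addrA -PoszD addn1.
have upd0 a i k : d (upd a i k) = d (upd a i 0).
  case: k => m; first by rewrite (upd_addn a i 0 m) add0r.
  by rewrite (upd_addn a i (Negz m) m.+1) NegzE addNr.
have d_upd0 a i : d a = d (upd a i 0).
  by rewrite -(upd0 a i (a i)); apply: d_ext => j; rewrite /upd; case: eqP => [->|].
suff d0 c : d c = d (fun _ => 0) by move=> a b; rewrite d0 [RHS]d0.
pose trunc m (j : 'I_n) : int := if (j < m)%N then 0 else c j.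
have d_trunc m : d c = d (trunc m).
  elim: m => [|m IHm]; first exact: d_ext.
  rewrite IHm; case: (ltnP m n) => [mn|nm]; last first.
    apply: d_ext => j; have jm := leq_trans (ltn_ord j) nm.
    by rewrite /trunc ltnS jm ltnW.
  rewrite (d_upd0 _ (Ordinal mn)); apply: d_ext => j.
  by rewrite /upd /trunc -val_eqE /= ltnS; case: ltngtP.
by rewrite (d_trunc n); apply: d_ext => j; rewrite /trunc ltn_ord.
Qed.

End CoordinateSubspaces.

Section Valuation.
Variables (Q : unitRingType) (v : Q -> int).
Hypotheses (hQ : division_ring Q) (hv : is_valuation v).

(* Elements of valuation at least [k]; [vge 0] is definitionally
   [in_valring v], and [vge 1] is the maximal ideal. *)
Definition vge (k : int) (x : Q) : Prop := x = 0 \/ k <= v x.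

Lemma in_maxidealE x : in_maxideal v x <-> vge 1 x.
Proof. by split=> -[->|vx]; [left|right; lia|left|right; lia]. Qed.

Lemma vgeW k l x : k <= l -> vge l x -> vge k x.
Proof. by move=> kl [->|lx]; [left|right; apply: le_trans lx]. Qed.

Lemma vgeM k l x y : vge k x -> vge l y -> vge (k + l) (x * y).
Proof.
have [->|x0] := eqVneq x 0; first by rewrite mul0r; left.
have [->|y0] := eqVneq y 0; first by rewrite mulr0; left.
case=> [/eqP|kx]; first by rewrite (negbTE x0).
case=> [/eqP|ly]; first by rewrite (negbTE y0).
by right; rewrite hv.1 // lerD.
Qed.

Lemma vgeD k x y : vge k x -> vge k y -> vge k (x + y).
Proof.
have [->|x0] := eqVneq x 0; first by rewrite add0r.
have [->|y0] := eqVneq y 0; first by rewrite addr0.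
have [->|xy0] := eqVneq (x + y) 0; first by left.
case=> [/eqP|kx]; first by rewrite (negbTE x0).
case=> [/eqP|ky]; first by rewrite (negbTE y0).
by right; apply: le_trans (hv.2 x y x0 y0 xy0); rewrite le_min kx ky.
Qed.

Lemma valuation1 : v 1 = 0.
Proof.
have : v (1 * 1) = v 1 + v 1 by rewrite hv.1 ?oner_neq0.
by rewrite mulr1; lia.
Qed.

Lemma valuationV x : x != 0 -> v x^-1 = - v x.
Proof.
move=> x0; apply/eqP; rewrite -subr_eq0 opprK addrC -hv.1 ?invr_eq0 //.
by rewrite mulrV ?hQ // valuation1.
Qed.

Variables (pi : Q).
Hypotheses (hpi0 : pi != 0) (hpi : v pi = 1).
Let upi : pi \is a GRing.unit := hQ hpi0.

Lemma vge_pi : vge 1 pi.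
Proof. by right; rewrite hpi. Qed.

Lemma vge_piV : vge (-1) pi^-1.
Proof. by right; rewrite valuationV // hpi. Qed.

Lemma vge_mulpi k w : vge k w -> vge (k + 1) (pi * w).
Proof. by move=> kw; rewrite addrC; apply: vgeM vge_pi kw. Qed.

Lemma vge_mulrpi k w : vge k w -> vge (k + 1) (w * pi).
Proof. by move=> kw; apply: vgeM kw vge_pi. Qed.

Lemma vge_mulpiV k w : vge (k + 1) w -> vge k (pi^-1 * w).
Proof. by move=> kw; rewrite -[k](addrK 1) addrC; apply: vgeM vge_piV kw. Qed.

Lemma vge_mulrpiV k w : vge (k + 1) w -> vge k (w * pi^-1).
Proof. by move=> kw; rewrite -[k](addrK 1); apply: vgeM kw vge_piV. Qed.

Lemma vge_conj k w : vge k w -> vge k (pi * w * pi^-1).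
Proof. by move=> /vge_mulpi /vge_mulrpiV. Qed.

Lemma vge_conjV k w : vge k w -> vge k (pi^-1 * w * pi).
Proof.
by move=> kw; rewrite -[k](subrK 1); apply/vge_mulrpi/vge_mulpiV; rewrite subrK.
Qed.

Lemma vge_conjE k w : vge k (pi * w * pi^-1) <-> vge k w.
Proof.
split=> [/vge_conjV|]; last exact: vge_conj.
by rewrite mulrA mulKr // mulrVK.
Qed.

Lemma vge_conjVE k w : vge k (pi^-1 * w * pi) <-> vge k w.
Proof.
split=> [/vge_conj|]; last exact: vge_conjV.
by rewrite mulrA mulVKr // mulrK.
Qed.

Variables (L : fieldType) (red : Q -> L) (phi phiinv : L -> L) (n : nat).
Variable V : 'rV[Q]_n -> Prop.
Hypotheses (hred : is_residue_map v red)
  (hphi : forall x, in_valring v x -> phi (red x) = red (pi * x * pi^-1))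
  (hinv2 : forall y, phiinv (phi y) = y) (hV : right_subspace V).

Local Notation Va := (Valpha_mem v red pi V).

Lemma red_eq0 w : vge 0 w -> red w = 0 <-> vge 1 w.
Proof. by case: hred => _ _ _ red_ker _ /red_ker ->; apply: in_maxidealE. Qed.

Lemma red_conjV w : vge 0 w -> red (pi^-1 * w * pi) = phiinv (red w).
Proof.
move=> w0; have wE : w = pi * (pi^-1 * w * pi) * pi^-1.
  by rewrite !mulrA mulrV // mul1r mulrK.
by rewrite [in RHS]wE -hphi ?hinv2 //; apply: vge_conjV.
Qed.

Lemma red_conj_eq0 w : vge 0 w -> red (pi * w * pi^-1) = 0 <-> red w = 0.
Proof.
by move=> w0; rewrite !red_eq0 ?vge_conjE //; apply: vge_conj.
Qed.

Lemma red_conjV_eq0 w : vge 0 w -> red (pi^-1 * w * pi) = 0 <-> red w = 0.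
Proof.
by move=> w0; rewrite !red_eq0 ?vge_conjVE //; apply: vge_conjV.
Qed.

Lemma Valpha0 a : Va a 0.
Proof.
have red0 : red 0 = 0 by apply/(red_eq0 (or_introl erefl)); left.
case: hV => V0 _ _; exists 0; split=> //.
by split=> j; rewrite !mxE mulr0 ?red0 //; left.
Qed.

Lemma ValphaD a y1 y2 : Va a y1 -> Va a y2 -> Va a (y1 + y2).
Proof.
case: hV => _ VD _ [x1 [Vx1 [Rx1 Ex1]]] [x2 [Vx2 [Rx2 Ex2]]].
exists (x1 + x2); split; first exact: VD.
split=> j; rewrite !mxE mulrDr; first by apply: vgeD; [exact: Rx1 | exact: Rx2].
by case: hred => _ redD _ _ _; rewrite redD ?Ex1 ?Ex2.
Qed.

Lemma ValphaZ a c y : Va a y -> Va a (c *: y).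
Proof.
case: hV hred => _ _ VZ [_ _ redM _ red_onto] [x [Vx [Rx Ex]]].
have [r [Rr <-]] := red_onto c.
exists (\row_j (x ord0 j * r)); split; first exact: VZ.
split=> j; rewrite !mxE mulrA; first exact: (@vgeM 0 0 _ _ (Rx j) Rr).
by rewrite redM // Ex mulrC.
Qed.

Lemma Valpha_contr a i y :
  Va a y /\ y ord0 i = 0 <-> exists2 z, Va (zadd a (ebasis i)) z & y = zero_coord i z.
Proof.
split=> [[[x [Vx [Rx Ex]]] yi] | [z [x [Vx [Rx Ex]]] ->]].
  exists (\row_j red (pi ^ (- zadd a (ebasis i) j) * x ord0 j)).
    exists x; split=> //; split=> j; rewrite ?mxE // zadd_ebasisE.
    case: eqP => [->|_]; last exact: Rx.
    rewrite mul_exprzNS //; apply: vge_mulpiV.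
    by rewrite add0r -red_eq0 -?Ex //; apply: Rx.
  apply/matrixP => o j; rewrite !mxE (ord1 o) zadd_ebasisE.
  by case: eqP => [->|_]; [exact: yi | exact: Ex].
have Rxi : vge 1 (pi ^ (- a i) * x ord0 i).
  rewrite mul_exprzN //; apply: (vge_mulpi (k := 0)).
  by have := Rx i; rewrite zadd_ebasisE eqxx.
split; last by rewrite mxE eqxx.
exists x; split=> //; split=> j; rewrite ?mxE.
  have [->|ji] := eqVneq j i; first exact: vgeW ler01 Rxi.
  by have := Rx j; rewrite zadd_ebasisE (negbTE ji).
have [->|ji] := eqVneq j i; first exact/esym/(red_eq0 (vgeW ler01 Rxi)).
by rewrite Ex zadd_ebasisE (negbTE ji).
Qed.

Lemma Valpha_shift_ones a y :
  Va (zadd a (@zones n)) y <-> exists2 x, Va a x & y = map_mx phiinv x.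
Proof.
case: hV => _ _ VZ; rewrite /zadd /zones.
split=> [[x [Vx [Rx Ex]]] | [z [x [Vx [Rx Ex]]] ->]].
  exists (\row_j red (pi ^ (- a j) * (x ord0 j * pi^-1))).
    exists (\row_j (x ord0 j * pi^-1)); split; first exact: VZ.
    by split=> j; rewrite !mxE // mul_exprzN_conj //; exact: vge_conj (Rx j).
  apply/matrixP => o j; rewrite !mxE (ord1 o) Ex mul_exprzN_conj //.
  by rewrite -hphi ?hinv2.
exists (\row_j (x ord0 j * pi)); split; first exact: VZ.
split=> j; rewrite !mxE mul_exprzNS_conj //; first exact: vge_conjV (Rx j).
by rewrite Ex red_conjV //; apply: Rx.
Qed.

Lemma delta_in_Valpha_succ a i y :
  Va a y -> y ord0 i != 0 -> Va (zadd a (ebasis i)) (delta_mx ord0 i).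
Proof.
case: hV => _ _ VZ [x [Vx [Rx Ex]]] yi.
pose z := \row_j red (pi ^ (- zadd a (ebasis i) j) * (x ord0 j * pi)).
have Vz : Va (zadd a (ebasis i)) z.
  exists (\row_j (x ord0 j * pi)); split; first exact: VZ.
  split=> j; rewrite !mxE // zadd_ebasisE; case: eqP => [->|_].
    by rewrite mul_exprzNS_conj //; exact: vge_conjV (Rx i).
  by rewrite mulrA; apply: vgeW (vge_mulrpi (Rx j)).
have zi : z ord0 i != 0.
  rewrite mxE zadd_ebasisE eqxx mul_exprzNS_conj //; apply/eqP.
  by rewrite red_conjV_eq0 -?Ex; [apply/eqP | apply: Rx].
have zE : z = z ord0 i *: delta_mx ord0 i.
  apply/matrixP => o j; rewrite !mxE (ord1 o) eqxx; have [->|ji] := eqVneq j i.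
    by rewrite mulr1.
  rewrite mulr0 zadd_ebasisE (negbTE ji) mulrA; apply/red_eq0.
    by apply: vgeW (vge_mulrpi (Rx j)).
  exact: vge_mulrpi (Rx j).
by rewrite -(scalerK zi (delta_mx ord0 i)) -zE; apply: ValphaZ.
Qed.

Lemma Valpha_coord_neq0 a i :
  Va (zadd a (ebasis i)) (delta_mx ord0 i) -> exists2 y, Va a y & y ord0 i != 0.
Proof.
case: hV => _ _ VZ [x [Vx [Rx Ex]]].
have Rxi := Rx i; have Exi := Ex i.
rewrite zadd_ebasisE eqxx in Rxi; rewrite mxE !eqxx zadd_ebasisE eqxx in Exi.
exists (\row_j red (pi ^ (- a j) * (x ord0 j * pi^-1))); last first.
  rewrite mxE mul_exprzN_conj //; apply/eqP.
  by rewrite red_conj_eq0 // -Exi; apply/eqP/oner_neq0.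
exists (\row_j (x ord0 j * pi^-1)); split; first exact: VZ.
split=> j; rewrite !mxE //.
have [->|ji] := eqVneq j i; first by rewrite mul_exprzN_conj //; exact: vge_conj Rxi.
have := Ex j; have := Rx j; rewrite mxE eqxx (negbTE ji) !zadd_ebasisE (negbTE ji).
by move=> Rj /esym /(red_eq0 Rj) m1; rewrite mulrA; apply: vge_mulrpiV.
Qed.

Variable F : ('I_n -> int) -> {vspace 'rV[L]_n}.
Hypothesis hF : forall a y, y \in F a <-> Va a y.

Lemma Valpha_linear_flock : linear_flock phiinv F.
Proof.
have contr a i y : contr_mem (F a) i y <-> del_mem (F (zadd a (ebasis i))) i y.
  rewrite /contr_mem /del_mem hF Valpha_contr.
  by split=> -[z za ->]; exists z => //; apply/hF.
split=> // [|a y].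
  apply: constant_of_shift_invariant => [a b /functional_extensionality -> // | a i].
  apply: dimv_contr_del => //.
  split=> [[y /hF ya yi] | /hF /Valpha_coord_neq0 [y ya yi]].
    by apply/hF; apply: delta_in_Valpha_succ ya yi.
  by exists y => //; apply/hF.
by rewrite hF Valpha_shift_ones; split=> -[x xa ->]; exists x => //; apply/hF.
Qed.

End Valuation.

Theorem lemma3p4 (Q : unitRingType) (v : Q -> int) (L : fieldType) (red : Q -> L)
    (pi : Q) (phi phiinv : L -> L) (n : nat) (V : 'rV[Q]_n -> Prop)
    (hQ : division_ring Q) (hv : is_valuation v) (hvs : surjective_valuation v)
    (hred : is_residue_map v red)
    (hpi0 : pi != 0) (hpi : v pi = 1)
    (hphi : forall x, in_valring v x -> phi (red x) = red (pi * x * pi^-1))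
    (hinv1 : forall y, phi (phiinv y) = y) (hinv2 : forall y, phiinv (phi y) = y)
    (hV : right_subspace V) :
  exists F : ('I_n -> int) -> {vspace 'rV[L]_n},
    (forall a y, y \in F a <-> Valpha_mem v red pi V a y) /\
    linear_flock phiinv F.
Proof.
have Valpha_vspace a : exists U : {vspace 'rV[L]_n},
    forall y, y \in U <-> Valpha_mem v red pi V a y.
  apply: vspace_of_pred; [exact: Valpha0 | exact: ValphaD | exact: ValphaZ].
pose F a := proj1_sig (constructive_indefinite_description _ (Valpha_vspace a)).
have hF a : forall y, y \in F a <-> Valpha_mem v red pi V a y.
  exact: proj2_sig (constructive_indefinite_description _ (Valpha_vspace a)).
exists F; split=> //.
exact: (Valpha_linear_flock hQ hv hpi0 hpi hred hphi hinv2 hV hF).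
Qed.
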